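(* Let $a\neq b$ be decimal digits, let $K\ge 1$ be an integer, and let $N=K\cdot 10^6+\overline{aaaaab}$, i.e. $N$ is the integer whose decimal representation is that of $K$ followed by the six digits $a,a,a,a,a,b$. If $N$ is an absolute prime, then $7\mid K$.
   Context: For a positive integer $N$ with decimal representation $d_1d_2\dots d_n$ (digits $d_k\in\{0,\dots,9\}$, $d_1\neq 0$), a permutation of the digits of $N$ is any integer $\sum_{k=1}^{n} d_{\sigma(k)}10^{n-k}$ with $\sigma$ a permutation of $\{1,\dots,n\}$. $N$ is called an absolute prime if every integer obtained by a permutation of the digits of $N$ (including $N$ itself) is prime. The notation $\overline{c_1c_2\dots c_m}$ denotes $\sum_{k=1}^m c_k10^{m-k}$. *)

From mathcomp Require Import all_boot.
Set Implicit Arguments. Unset Strict Implicit. Unset Printing Implicit Defensive.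

Fixpoint digits_fuel (fuel n : nat) : seq nat :=
  match fuel with
  | 0 => [::]
  | f.+1 => if n == 0 then [::] else rcons (digits_fuel f (n %/ 10)) (n %% 10)
  end.

(* decimal representation d_1 ... d_n of n (empty for n = 0) *)
Definition digits (n : nat) : seq nat := digits_fuel n n.

Definition digits_val (s : seq nat) : nat := foldl (fun acc d => acc * 10 + d) 0 s.

Definition absolute_prime (N : nat) : Prop :=
  0 < N /\ forall s : seq nat, perm_eq s (digits N) -> prime (digits_val s).

From mathcomp Require Import all_boot all_algebra zify ring.
Import GRing.Theory.

(* Moving the lone digit b of aaaaab through the six positions changes the
   number by (b - a) 10^j, and modulo 7 (where 10^6 = 1 and 111111 = 0) these
   six numbers are K + (b - a) 10^j.  Since 10 is a primitive root mod 7, the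
   residues (b - a) 10^j, j < 6, run over all nonzero classes when 7 does not
   divide b - a; so if 7 does not divide K, one of the six numbers is a
   multiple of 7 larger than 7.  If 7 divides b - a, then a and b have
   different parities and a permutation ending in the even one is even. *)

Lemma digits_fuel_indep f g n : n <= f -> n <= g ->
  digits_fuel f n = digits_fuel g n.
Proof.
elim: f g n => [|f IH] [|g] n /=; rewrite ?leqn0.
- by [].
- by move=> /eqP ->.
- by move=> _ /eqP ->.
case: eqP => // /eqP n0 nf ng; congr rcons; apply: IH; rewrite -ltnS.
- by apply: leq_trans nf; rewrite ltn_divLR //; lia.
- by apply: leq_trans ng; rewrite ltn_divLR //; lia.
Qed.

Lemma digits_rcons K d : 0 < K -> d < 10 -> digits (K * 10 + d) = rcons (digits K) d.
Proof.
move=> K0 d10; rewrite /digits.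
have [m Em] : exists m, K * 10 + d = m.+1 by exists (K * 10 + d).-1; lia.
rewrite {1}Em /= divnMDl // divn_small // addn0 modnMDl modn_small // ifN; last by lia.
by congr rcons; apply: digits_fuel_indep; lia.
Qed.

Lemma digits_valK n : digits_val (digits n) = n.
Proof.
suff fuelK f m : m <= f -> digits_val (digits_fuel f m) = m by exact: fuelK.
elim: f m => [|f IH] m /=; first by rewrite leqn0 => /eqP ->.
case: eqP => [-> //|/eqP m0 mf].
rewrite /digits_val foldl_rcons -/(digits_val _) IH; first by rewrite -divn_eq.
by rewrite -ltnS; apply: leq_trans mf; rewrite ltn_divLR //; lia.
Qed.

Lemma digits_val_cat s t :
  digits_val (s ++ t) = digits_val s * 10 ^ size t + digits_val t.
Proof.
rewrite /digits_val foldl_cat; move: (foldl _ 0 s) => acc.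
elim/last_ind: t => [|t d IH]; first by rewrite muln1 addn0.
by rewrite !foldl_rcons IH size_rcons expnSr; lia.
Qed.

Lemma digits_val_cons d s : digits_val (d :: s) = d * 10 ^ size s + digits_val s.
Proof. exact: (digits_val_cat [:: d]). Qed.

Lemma digits_append K s : 0 < K -> all (gtn 10) s ->
  digits (K * 10 ^ size s + digits_val s) = digits K ++ s.
Proof.
move=> K0; elim/last_ind: s => [|s d IH]; first by rewrite muln1 addn0 cats0.
rewrite all_rcons => /andP[d10 s10].
have -> : K * 10 ^ size (rcons s d) + digits_val (rcons s d) =
          (K * 10 ^ size s + digits_val s) * 10 + d.
  by rewrite -cats1 digits_val_cat size_cat expnD /digits_val /=; lia.
by rewrite digits_rcons ?IH ?rcons_cat // addn_gt0 muln_gt0 K0 expn_gt0.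
Qed.

Lemma absolute_prime_perm {K s t} : 0 < K -> all (gtn 10) s ->
  absolute_prime (K * 10 ^ size s + digits_val s) -> perm_eq t s ->
  prime (K * 10 ^ size s + digits_val t).
Proof.
move=> K0 s10 [_ APs] ts.
have := APs (digits K ++ t); rewrite digits_append // perm_cat2l => /(_ ts).
by rewrite digits_val_cat digits_valK (perm_size ts).
Qed.

Lemma pow10_mod7_surj n : 0 < n < 7 -> exists2 j, j < 6 & n = 10 ^ j %% 7.
Proof.
by case: n => [|[|[|[|[|[|[|n]]]]]]] //= _;
  [exists 0 | exists 2 | exists 1 | exists 4 | exists 5 | exists 3].
Qed.

Section PrimeField7.
Local Open Scope ring_scope.

Lemma Fp7_pow10_surj (x : 'F_7) : x != 0 -> exists2 j, (j < 6)%N & x = 10 ^+ j.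
Proof.
have x7 : (val x < 7)%N.
  by rewrite -[X in (_ < X)%N](Fp_cast (isT : prime 7)); exact: ltn_ord.
move=> x0; have [|j j6 Ej] := pow10_mod7_surj (val x).
  rewrite x7 andbT lt0n; apply: contra x0 => /eqP v0.
  by apply/eqP; apply: val_inj; rewrite v0.
by exists j => //; apply: val_inj; rewrite /= -natrX val_Fp_nat.
Qed.

Lemma pow10_mod7_solution {k a b} : ~~ (7 %| k)%N -> (a != b %[mod 7])%N ->
  exists2 j, (j < 6)%N & (k + b * 10 ^ j = a * 10 ^ j %[mod 7])%N.
Proof.
move=> k7 ab7.
have natF_eq m n : ((m%:R : 'F_7) == n%:R) = (m == n %[mod 7])%N.
  by rewrite -(inj_eq val_inj) /= !val_Fp_nat.
have natF0 n : ((n%:R : 'F_7) == 0) = (7 %| n)%N.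
  by rewrite -[0 in LHS]/(0%:R) natF_eq mod0n.
have dab : (b%:R - a%:R : 'F_7) != 0 by rewrite subr_eq0 natF_eq eq_sym.
have [j j6 Ej] : exists2 j, (j < 6)%N & - k%:R / (b%:R - a%:R) = (10 : 'F_7) ^+ j.
  apply: Fp7_pow10_surj; rewrite mulf_eq0 invr_eq0 oppr_eq0 natF0 negb_or k7.
  exact: dab.
exists j => //; apply/eqP; rewrite -natF_eq natrD !natrM natrX -Ej.
by apply/eqP; field.
Qed.

End PrimeField7.

Definition lone_digit (n a b j : nat) : seq nat := nseq (n - j) a ++ b :: nseq j a.

Lemma perm_lone_digit n a b j : j <= n ->
  perm_eq (lone_digit n a b j) (rcons (nseq n a) b).
Proof.
move=> jn; rewrite perm_sym perm_rcons perm_sym /lone_digit -cat1s perm_catCA.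
by rewrite /= -nseqD subnK.
Qed.

Lemma lone_digit_val n a b j : j <= n ->
  digits_val (lone_digit n a b j) + a * 10 ^ j = digits_val (nseq n.+1 a) + b * 10 ^ j.
Proof.
move=> jn; have -> : nseq n.+1 a = nseq (n - j) a ++ a :: nseq j a.
  by rewrite -[a :: nseq j a]/(nseq j.+1 a) -nseqD addnS subnK.
rewrite /lone_digit !digits_val_cat !digits_val_cons /= size_nseq; lia.
Qed.

Lemma digits_val_nseq6_mod7 a : digits_val (nseq 6 a) = 0 %[mod 7].
Proof. by rewrite /digits_val /=; lia. Qed.

Theorem lemma4 (a b K : nat) :
  a < 10 -> b < 10 -> a != b -> 1 <= K ->
  absolute_prime (K * 10 ^ 6 + digits_val [:: a; a; a; a; a; b]) ->
  7 %| K.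
Proof.
move=> a10 b10 ab K0 APN.
pose N j := K * 10 ^ 6 + digits_val (lone_digit 5 a b j).
have prime_N j : j < 6 -> prime (N j).
  move=> j6; have digits10 : all (gtn 10) [:: a; a; a; a; a; b] by rewrite /= a10 b10.
  exact: (absolute_prime_perm K0 digits10 APN (perm_lone_digit 5 a b j j6)).
have N_no_small_factor j d : j < 6 -> 1 < d <= 7 -> ~~ (d %| N j).
  move=> j6 d7; have d1 : d != 1 by lia.
  by apply/negP => /(prime_nt_dvdP (prime_N j j6) d1) dN; move: d7; rewrite dN /N; lia.
have N_shift j : j < 6 -> N j + a * 10 ^ j = K + b * 10 ^ j %[mod 7].
  move=> j6; have := lone_digit_val 5 a b j j6; have := digits_val_nseq6_mod7 a.
  by rewrite /N; lia.
have [ab7 | ab7] := boolP (a == b %[mod 7]).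
  have [b2 | a2] : 2 %| b \/ 2 %| a by move/eqP: ab7; lia.
  - by have := N_no_small_factor 0 2; rewrite /N /digits_val /=; lia.
  - by have := N_no_small_factor 1 2; rewrite /N /digits_val /=; lia.
apply/contraT => K7.
have [j j6 Ej] := pow10_mod7_solution K7 ab7.
have : N j + a * 10 ^ j == 0 + a * 10 ^ j %[mod 7] by rewrite N_shift // Ej.
by rewrite eqn_modDr mod0n -/(dvdn 7 _) (negbTE (N_no_small_factor j 7 j6 isT)).
Qed.
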